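(* If $K\subseteq\mathbb{R}^d$ is a compact set with infinitely many connected components, then $(C^1(K),\|\cdot\|_{C^1(K)})$ is not complete.
   Context: $C^1(K)$ is the set of $f:K\to\mathbb{R}$ admitting a continuous derivative on $K$, i.e. a continuous $df:K\to\mathbb{R}^d$ with $\lim_{y\to x,\,y\in K\setminus\{x\}}\frac{f(y)-f(x)-\langle df(x),y-x\rangle}{|y-x|}=0$ for all $x\in K$. Its norm is $\|f\|_{C^1(K)}=\|f\|_K+\inf\{\|df\|_K: df \text{ a continuous derivative of } f \text{ on } K\}$, where $\|\cdot\|_K$ is the sup norm on $K$. *)

From Stdlib Require Import Reals Classical ClassicalEpsilon.
From mathcomp Require Import ssreflect ssrbool ssrfun eqtype ssrnat seq fintype bigop.
Open Scope R_scope.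

Definition vec (d : nat) := 'I_d -> R.

Definition vsub {d} (x y : vec d) : vec d := fun i => x i - y i.
Definition inner {d} (x y : vec d) : R := \big[Rplus/0]_(i < d) (x i * y i).
Definition enorm {d} (x : vec d) : R := sqrt (inner x x).

Definition vopen {d} (U : vec d -> Prop) : Prop :=
  forall x, U x -> exists r, 0 < r /\ forall y, enorm (vsub y x) < r -> U y.

(* Compactness (sequential compactness, equivalent to open-cover compactness
   in the metric space R^d). *)
Definition vcompact {d} (K : vec d -> Prop) : Prop :=
  forall u : nat -> vec d, (forall n, K (u n)) ->
  exists (phi : nat -> nat) (l : vec d),
    (forall n m, (n < m)%nat -> (phi n < phi m)%nat) /\ K l /\
    forall eps, 0 < eps -> exists N, forall n, (N <= n)%nat ->
      enorm (vsub (u (phi n)) l) < eps.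

(* Connectedness of a subset C of R^d in the subspace topology. *)
Definition vconnected {d} (C : vec d -> Prop) : Prop :=
  forall U V : vec d -> Prop, vopen U -> vopen V ->
    (forall x, C x -> U x \/ V x) ->
    (forall x, C x -> U x -> V x -> False) ->
    (forall x, C x -> U x) \/ (forall x, C x -> V x).

Definition same_component {d} (K : vec d -> Prop) (x y : vec d) : Prop :=
  exists C : vec d -> Prop,
    vconnected C /\ (forall z, C z -> K z) /\ C x /\ C y.

Definition infinitely_many_components {d} (K : vec d -> Prop) : Prop :=
  ~ exists l : list (vec d), forall y, K y ->
      exists x, List.In x l /\ same_component K x y.

Definition is_cont_deriv {d} (K : vec d -> Prop) (f : vec d -> R)
  (df : vec d -> vec d) : Prop :=
  (forall x, K x -> forall eps, 0 < eps -> exists delta, 0 < delta /\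
     forall y, K y -> enorm (vsub y x) < delta ->
       enorm (vsub (df y) (df x)) < eps) /\
  (forall x, K x -> forall eps, 0 < eps -> exists delta, 0 < delta /\
     forall y, K y -> y <> x -> enorm (vsub y x) < delta ->
       Rabs ((f y - f x - inner (df x) (vsub y x)) / enorm (vsub y x)) < eps).

(* f belongs to C^1(K). Functions are total on R^d; only values on K matter. *)
Definition C1 {d} (K : vec d -> Prop) (f : vec d -> R) : Prop :=
  exists df, is_cont_deriv K f df.

(* Supremum and infimum of a set of reals (chosen classically; the value is
   arbitrary when no such bound exists). *)
Definition is_glb (E : R -> Prop) (m : R) : Prop :=
  (forall y, E y -> m <= y) /\ (forall b, (forall y, E y -> b <= y) -> b <= m).
Definition Rsup (E : R -> Prop) : R := epsilon (inhabits 0) (is_lub E).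
Definition Rinf (E : R -> Prop) : R := epsilon (inhabits 0) (is_glb E).

Definition supnormK {d} (K : vec d -> Prop) (g : vec d -> R) : R :=
  Rsup (fun y => exists x, K x /\ y = Rabs (g x)).
Definition supnormK_vec {d} (K : vec d -> Prop) (g : vec d -> vec d) : R :=
  Rsup (fun y => exists x, K x /\ y = enorm (g x)).

Definition C1norm {d} (K : vec d -> Prop) (f : vec d -> R) : R :=
  supnormK K f +
  Rinf (fun y => exists df, is_cont_deriv K f df /\ y = supnormK_vec K df).

Definition C1_complete {d} (K : vec d -> Prop) : Prop :=
  forall u : nat -> vec d -> R,
    (forall n, C1 K (u n)) ->
    (forall eps, 0 < eps -> exists N, forall n m, (N <= n)%nat -> (N <= m)%nat ->
       C1norm K (fun x => u n x - u m x) < eps) ->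
    exists f, C1 K f /\
      forall eps, 0 < eps -> exists N, forall n, (N <= n)%nat ->
        C1norm K (fun x => u n x - f x) < eps.

From Pilot Require Import Defs.
From HB Require Import structures.
From Stdlib Require Import Reals Lra Classical ClassicalEpsilon FunctionalExtensionality.
From mathcomp Require Import ssreflect ssrbool ssrfun eqtype ssrnat seq fintype bigop.
Open Scope R_scope.

(* Splitting off, again and again, a relatively clopen piece whose complement still has
   infinitely many components yields disjoint nonempty relatively clopen pieces B_k of K.
   By compactness, points b_k of B_k converge (along a subsequence) to some x in K, and x lies
   in no piece since the pieces are relatively open. The functions equal to sqrt |b_k - x| on
   B_k for k < N and to 0 elsewhere are locally constant, hence C^1 with zero derivative, and
   form a Cauchy sequence in C^1(K). A C^1 limit f would have f(x) = 0 and
   f(b_k) = sqrt |b_k - x|, which is not O(|b_k - x|): f is not differentiable at x. *)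

HB.instance Definition _ := Monoid.isComLaw.Build R 0 Rplus
  (fun x y z => esym (Rplus_assoc x y z)) Rplus_comm Rplus_0_l.

Section Euclid.
Variable d : nat.
Implicit Types (v w : vec d) (F G : 'I_d -> R).

Lemma leR_sum F G : (forall i, F i <= G i) ->
  \big[Rplus/0]_(i < d) F i <= \big[Rplus/0]_(i < d) G i.
Proof. by move=> FG; apply: (big_ind2 (fun x y => x <= y)) => // *; lra. Qed.

Lemma sumR_ge0 F : (forall i, 0 <= F i) -> 0 <= \big[Rplus/0]_(i < d) F i.
Proof. by move=> F0; apply: (big_ind (fun x => 0 <= x)) => // *; lra. Qed.

Lemma Rabs_sumR F :
  Rabs (\big[Rplus/0]_(i < d) F i) <= \big[Rplus/0]_(i < d) Rabs (F i).
Proof.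
apply: (big_ind2 (fun x y => Rabs x <= y)) => [|x1 x2 y1 y2 H1 H2|i _].
- by rewrite Rabs_R0; lra.
- by have := Rabs_triang x1 y1; lra.
- by lra.
Qed.

Lemma mulR_sumr c F :
  \big[Rplus/0]_(i < d) (c * F i) = c * \big[Rplus/0]_(i < d) F i.
Proof. by apply: (big_ind2 (fun x y => x = c * y)) => [|? ? ? ? -> ->|]; try ring. Qed.

Lemma enorm_ge0 v : 0 <= enorm v.
Proof. exact: sqrt_pos. Qed.

Lemma Rabs_coord_le_enorm v i : Rabs (v i) <= enorm v.
Proof.
rewrite /enorm -sqrt_Rsqr_abs; apply: sqrt_le_1_alt.
rewrite /Rsqr /inner (bigD1 i) //= -{1}(Rplus_0_r (v i * v i)).
apply: Rplus_le_compat_l.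
by apply: (big_ind (fun x => 0 <= x)) => [|*|j _]; nra.
Qed.

Lemma enorm_le_sum_Rabs v : enorm v <= \big[Rplus/0]_(i < d) Rabs (v i).
Proof.
have S0 := sumR_ge0 (fun i => Rabs (v i)) (fun i => Rabs_pos (v i)).
rewrite /enorm -(sqrt_Rsqr _ S0); apply: sqrt_le_1_alt; rewrite /Rsqr /inner.
suff [] : \big[Rplus/0]_(i < d) (v i * v i) <=
            (\big[Rplus/0]_(i < d) Rabs (v i)) * (\big[Rplus/0]_(i < d) Rabs (v i))
          /\ 0 <= \big[Rplus/0]_(i < d) Rabs (v i) by [].
apply: (big_ind2 (fun x y => x <= y * y /\ 0 <= y)) => [|x1 x2 y1 y2 [? ?] [? ?]|i _].
- by split; lra.
- by split; nra.
- by split; [rewrite -Rabs_mult Rabs_right; nra | apply: Rabs_pos].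
Qed.

Lemma Rabs_inner_le w v :
  Rabs (inner w v) <= (\big[Rplus/0]_(i < d) Rabs (w i)) * enorm v.
Proof.
apply: Rle_trans (Rabs_sumR _) _; rewrite Rmult_comm -mulR_sumr.
apply: leR_sum => i; rewrite Rabs_mult.
by have := Rabs_coord_le_enorm v i; have := Rabs_pos (w i); nra.
Qed.

Lemma inner0l v : inner (fun _ => 0) v = 0.
Proof. by rewrite /inner big1 // => i _; ring. Qed.

Lemma enorm0 : enorm (fun _ : 'I_d => 0) = 0.
Proof. by rewrite /enorm inner0l sqrt_0. Qed.

Lemma enorm_vsub_gt0 v w : v <> w -> 0 < enorm (vsub v w).
Proof.
move=> vw; case: (enorm_ge0 (vsub v w)) => // /esym vw0; case: vw.
apply: functional_extensionality => i.
by have := Rabs_coord_le_enorm (vsub v w) i; rewrite vw0 /vsub; split_Rabs; lra.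
Qed.

Lemma enorm_vsub_opp v w :
  enorm (vsub (fun i => - v i) (fun i => - w i)) = enorm (vsub v w).
Proof. by rewrite /enorm /inner /vsub; congr sqrt; apply: eq_bigr => i _; ring. Qed.

Lemma inner_oppl v w : inner (fun i => - v i) w = - inner v w.
Proof.
rewrite /inner; apply: (big_ind2 (fun x y => x = - y)) => [|? ? ? ? -> ->|i _]; ring.
Qed.

End Euclid.

Lemma strictly_increasing_ge (phi : nat -> nat) :
  (forall n m, (n < m)%nat -> (phi n < phi m)%nat) -> forall n, (n <= phi n)%nat.
Proof. by move=> phi_incr; elim=> // n IH; exact: leq_ltn_trans IH (phi_incr _ _ (ltnSn n)). Qed.

Lemma Rabs_lt_of_div z e eps : 0 < e -> Rabs (z / e) < eps -> Rabs z < eps * e.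
Proof.
move=> e0; rewrite Rabs_mult Rabs_inv (Rabs_right e); last lra.
move=> ze; have -> : Rabs z = Rabs z * / e * e by field; lra.
by nra.
Qed.

Lemma is_lub_Rsup (E : R -> Prop) :
  (exists y, E y) -> (exists B, forall y, E y -> y <= B) -> is_lub E (Rsup E).
Proof.
move=> E_ne E_ub; apply: epsilon_spec.
by case: (completeness E E_ub E_ne) => m Hm; exists m.
Qed.

Lemma is_glb_Rinf (E : R -> Prop) :
  (exists y, E y) -> (exists B, forall y, E y -> B <= y) -> is_glb E (Rinf E).
Proof.
move=> [y0 Ey0] [B HB]; apply: epsilon_spec.
have negE_ub : bound (fun y => E (- y)) by exists (- B) => y /HB; lra.
have negE_ne : exists y, E (- y) by exists (- y0); rewrite Ropp_involutive.
case: (completeness _ negE_ub negE_ne) => m [m_ub m_least].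
exists (- m); split => [y Ey | b b_lb].
- by have := m_ub (- y); rewrite Ropp_involutive => /(_ Ey); lra.
- suff : m <= - b by lra.
  by apply: m_least => y /b_lb; lra.
Qed.

Lemma Rsup_ub (E : R -> Prop) y :
  (exists B, forall z, E z -> z <= B) -> E y -> y <= Rsup E.
Proof. by move=> E_ub Ey; apply: (is_lub_Rsup E (ex_intro _ y Ey) E_ub).1. Qed.

Lemma Rsup_le (E : R -> Prop) B :
  (exists y, E y) -> (forall z, E z -> z <= B) -> Rsup E <= B.
Proof. by move=> E_ne E_ub; apply: (is_lub_Rsup E E_ne (ex_intro _ B E_ub)).2. Qed.

Lemma Rinf_lb (E : R -> Prop) y :
  (exists B, forall z, E z -> B <= z) -> E y -> Rinf E <= y.
Proof. by move=> E_lb Ey; apply: (is_glb_Rinf E (ex_intro _ y Ey) E_lb).1. Qed.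

Lemma Rinf_ge (E : R -> Prop) B :
  (exists y, E y) -> (forall z, E z -> B <= z) -> B <= Rinf E.
Proof. by move=> E_ne E_lb; apply: (is_glb_Rinf E E_ne (ex_intro _ B E_lb)).2. Qed.

Section OnK.
Variables (d : nat) (K : vec d -> Prop).
Hypothesis K_compact : vcompact K.

Lemma locally_bounded_bounded (h : vec d -> R) :
  (forall x, K x -> exists r B, 0 < r /\
     forall y, K y -> enorm (vsub y x) < r -> h y <= B) ->
  exists M, forall y, K y -> h y <= M.
Proof.
move=> h_loc; apply: NNPP => h_unbdd.
have [u Hu] : exists u : nat -> vec d, forall n, K (u n) /\ INR n < h (u n).
  apply: (choice (fun n y => K y /\ INR n < h y)) => n; apply: NNPP => Hn; apply: h_unbdd; exists (INR n) => y Ky.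
  by apply: Rnot_lt_le => ?; apply: Hn; exists y.
case: (K_compact u (fun n => (Hu n).1)) => phi [l [phi_incr [Kl u_cvg]]].
case: (h_loc l Kl) => r [B [r0 HB]]; case: (u_cvg r r0) => N HN.
case: (INR_archimed 1 B) => [|m Hm]; first lra.
pose n := maxn N m.
have hB := HB _ (Hu _).1 (HN n (leq_maxl _ _)).
have m_le : (m <= phi n)%nat := leq_trans (leq_maxr N m) (strictly_increasing_ge _ phi_incr n).
have := le_INR _ _ (elimT leP m_le); have := (Hu (phi n)).2; lra.
Qed.

Lemma cont_deriv_bounded f df :
  is_cont_deriv K f df -> exists M, forall y, K y -> enorm (df y) <= M.
Proof.
move=> [df_cont _]; apply: locally_bounded_bounded => x Kx.
case: (df_cont x Kx 1 Rlt_0_1) => r [r0 Hr].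
exists r, (\big[Rplus/0]_(i < d) (Rabs (df x i) + 1)); split => // y Ky yx.
apply: Rle_trans (enorm_le_sum_Rabs _ _) _; apply: leR_sum => i.
have := Rabs_coord_le_enorm _ (vsub (df y) (df x)) i; have := Hr y Ky yx.
by rewrite /vsub; have := Rabs_triang_inv (df y i) (df x i); lra.
Qed.

Lemma cont_deriv_lipschitz_at f df x : is_cont_deriv K f df -> K x ->
  exists C delta, 0 < C /\ 0 < delta /\ forall y, K y ->
    enorm (vsub y x) < delta -> Rabs (f y - f x) <= C * enorm (vsub y x).
Proof.
move=> [_ f_diff] Kx; case: (f_diff x Kx 1 Rlt_0_1) => delta [delta0 Hdelta].
set S := \big[Rplus/0]_(i < d) Rabs (df x i).
have S0 : 0 <= S by apply: sumR_ge0 => i; apply: Rabs_pos.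
exists (S + 1), delta; split; [lra | split => // y Ky yx].
case: (classic (y = x)) => [->|y_ne_x].
  by rewrite Rminus_diag Rabs_R0; apply: Rmult_le_pos; [lra | apply: enorm_ge0].
have := Rabs_lt_of_div _ _ _ (enorm_vsub_gt0 _ _ _ y_ne_x) (Hdelta y Ky y_ne_x yx).
have := Rabs_inner_le _ (df x) (vsub y x); rewrite -/S.
set I := inner _ _; move=> HI Hrem.
have := Rabs_triang (f y - f x - I) I; have -> : f y - f x - I + I = f y - f x by ring.
by lra.
Qed.

Lemma cont_deriv_fun_bounded f df :
  is_cont_deriv K f df -> exists M, forall y, K y -> Rabs (f y) <= M.
Proof.
move=> f_df; apply: locally_bounded_bounded => x Kx.
case: (cont_deriv_lipschitz_at _ _ x f_df Kx) => C [delta [C0 [delta0 Hlip]]].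
exists delta, (Rabs (f x) + C * delta); split => // y Ky yx.
have := Hlip y Ky yx; have := Rabs_triang_inv (f y) (f x).
by have := Rmult_lt_compat_l _ _ _ C0 yx; lra.
Qed.

Definition locconst (h : vec d -> R) := forall x, K x -> exists r, 0 < r /\
  forall y, K y -> enorm (vsub y x) < r -> h y = h x.

Lemma locconst_sub u v : locconst u -> locconst v -> locconst (fun y => u y - v y).
Proof.
move=> u_lc v_lc x Kx.
case: (u_lc x Kx) => r1 [r10 H1]; case: (v_lc x Kx) => r2 [r20 H2].
exists (Rmin r1 r2); split => [|y Ky yx]; first exact: Rmin_pos.
rewrite (H1 y Ky); last by apply: Rlt_le_trans yx (Rmin_l _ _).
by rewrite (H2 y Ky) //; apply: Rlt_le_trans yx (Rmin_r _ _).
Qed.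

Lemma locconst_cont_deriv h : locconst h -> is_cont_deriv K h (fun _ _ => 0).
Proof.
move=> h_lc; split=> x Kx eps eps0.
  exists 1; split => [|y _ _]; first lra.
  by rewrite /vsub Rminus_0_r enorm0.
case: (h_lc x Kx) => r [r0 Hr]; exists r; split => // y Ky _ yx.
by rewrite (Hr y Ky yx) inner0l Rminus_diag Rminus_0_r /Rdiv Rmult_0_l Rabs_R0.
Qed.

Lemma locconst_sub_cont_deriv u f df : locconst u -> is_cont_deriv K f df ->
  is_cont_deriv K (fun y => u y - f y) (fun y i => - df y i).
Proof.
move=> u_lc [df_cont f_diff]; split=> x Kx eps eps0.
  case: (df_cont x Kx eps eps0) => r [r0 Hr]; exists r; split => // y Ky yx.
  by rewrite enorm_vsub_opp; apply: Hr.
case: (f_diff x Kx eps eps0) => r [r0 Hr]; case: (u_lc x Kx) => r' [r0' Hr'].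
exists (Rmin r r'); split => [|y Ky y_ne_x yx]; first exact: Rmin_pos.
rewrite (Hr' y Ky); last by apply: Rlt_le_trans yx (Rmin_r _ _).
rewrite inner_oppl.
have -> : u x - f y - (u x - f x) - - inner (df x) (vsub y x) =
          - (f y - f x - inner (df x) (vsub y x)) by ring.
rewrite /Rdiv Ropp_mult_distr_l_reverse Rabs_Ropp.
by apply: Hr => //; apply: Rlt_le_trans yx (Rmin_l _ _).
Qed.

Lemma supnormK_vec_ge0 f df y : is_cont_deriv K f df -> K y -> 0 <= supnormK_vec K df.
Proof.
move=> f_df Ky; case: (cont_deriv_bounded _ _ f_df) => M HM.
apply: Rle_trans (enorm_ge0 _ (df y)) _; apply: Rsup_ub; last by exists y.
by exists M => _ [z [Kz ->]]; apply: HM.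
Qed.

Lemma C1norm_ge h y : Defs.C1 K h -> K y -> Rabs (h y) <= C1norm K h.
Proof.
move=> [dh h_dh] Ky; rewrite /C1norm.
have sup_ge : Rabs (h y) <= supnormK K h.
  case: (cont_deriv_fun_bounded _ _ h_dh) => M HM.
  by apply: Rsup_ub; [exists M => _ [z [Kz ->]]; apply: HM | exists y].
suff : 0 <= Rinf (fun z => exists dh, is_cont_deriv K h dh /\ z = supnormK_vec K dh) by lra.
apply: Rinf_ge => [|_ [dh' [h_dh' ->]]]; first by exists (supnormK_vec K dh), dh.
exact: (supnormK_vec_ge0 _ _ _ h_dh' Ky).
Qed.

Lemma C1norm_le_locconst h B : (exists x, K x) -> locconst h ->
  (forall y, K y -> Rabs (h y) <= B) -> C1norm K h <= B.
Proof.
move=> [x Kx] h_lc hB; rewrite /C1norm.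
have h_d0 := locconst_cont_deriv h h_lc.
have sup_le : supnormK K h <= B.
  by apply: Rsup_le => [|_ [y [Ky ->]]]; [exists (Rabs (h x)), x | apply: hB].
have d0_le : supnormK_vec K (fun _ _ => 0) <= 0.
  apply: Rsup_le => [|_ [y [_ ->]]]; last by rewrite enorm0; lra.
  by exists (enorm (fun _ : 'I_d => 0)), x.
suff : Rinf (fun z => exists dh, is_cont_deriv K h dh /\ z = supnormK_vec K dh)
         <= supnormK_vec K (fun _ _ => 0) by lra.
apply: Rinf_lb; last by exists (fun _ _ => 0).
by exists 0 => _ [dh [h_dh ->]]; apply: (supnormK_vec_ge0 _ _ _ h_dh Kx).
Qed.

End OnK.

Section Components.
Variable d : nat.
Implicit Types X T A : vec d -> Prop.

Definition relclopen X A := forall x, X x -> exists r, 0 < r /\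
  forall y, X y -> enorm (vsub y x) < r -> (A y <-> A x).

Definition finitely_many_components X := exists l : list (vec d),
  forall y, X y -> exists x, List.In x l /\ same_component X x y.

Lemma relclopen_refl X : relclopen X X.
Proof. by move=> x Xx; exists 1; split => [|y Xy _]; [lra | tauto]. Qed.

Lemma relclopen_diff X T A :
  relclopen X T -> relclopen X A -> relclopen X (fun y => T y /\ ~ A y).
Proof.
move=> T_cl A_cl x Xx.
case: (T_cl x Xx) => r1 [r10 H1]; case: (A_cl x Xx) => r2 [r20 H2].
exists (Rmin r1 r2); split => [|y Xy yx]; first exact: Rmin_pos.
have := H1 y Xy (Rlt_le_trans _ _ _ yx (Rmin_l _ _)).
by have := H2 y Xy (Rlt_le_trans _ _ _ yx (Rmin_r _ _)); tauto.
Qed.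

Lemma relclopen_trans X T A : (forall y, T y -> X y) -> (forall y, A y -> T y) ->
  relclopen X T -> relclopen T A -> relclopen X A.
Proof.
move=> TX AT T_cl A_cl x Xx; case: (T_cl x Xx) => r1 [r10 H1].
case: (classic (T x)) => [Tx | nTx]; last first.
  exists r1; split => // y Xy yx.
  by have := H1 y Xy yx; have := AT y; have := AT x; tauto.
case: (A_cl x Tx) => r2 [r20 H2].
exists (Rmin r1 r2); split => [|y Xy yx]; first exact: Rmin_pos.
apply: H2 (Rlt_le_trans _ _ _ yx (Rmin_r _ _)).
by apply/(H1 y Xy (Rlt_le_trans _ _ _ yx (Rmin_l _ _))).
Qed.

Lemma same_component_mono X Y x y :
  (forall z, Y z -> X z) -> same_component Y x y -> same_component X x y.
Proof. by move=> YX [C [C_conn [CY xy]]]; exists C; split=> //; split=> // z /CY /YX. Qed.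

Lemma finitely_many_components_union X A B :
  (forall y, X y -> A y \/ B y) -> (forall y, A y -> X y) -> (forall y, B y -> X y) ->
  finitely_many_components A -> finitely_many_components B ->
  finitely_many_components X.
Proof.
move=> XAB AX BX [lA HlA] [lB HlB]; exists (lA ++ lB) => y Xy.
case: (XAB y Xy) => [/HlA | /HlB] [x [lx xy]]; exists x.
- by split; [apply: List.in_or_app; left | exact: same_component_mono xy].
- by split; [apply: List.in_or_app; right | exact: same_component_mono xy].
Qed.

Lemma infinitely_many_components_disconnected X : infinitely_many_components X ->
  exists U V : vec d -> Prop, vopen U /\ vopen V /\
    (forall x, X x -> U x \/ V x) /\ (forall x, X x -> U x -> V x -> False) /\
    ~ (forall x, X x -> U x) /\ ~ (forall x, X x -> V x).
Proof.
move=> X_inf; have [x0 Xx0] : exists x0, X x0.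
  by apply: NNPP => X_empty; apply: X_inf; exists nil => y Xy; case: X_empty; exists y.
apply: NNPP => X_conn; apply: X_inf; exists (x0 :: nil) => y Xy.
exists x0; split; first by left.
exists X; split; last by split=> //; split.
move=> U V U_op V_op XUV UV_disj.
case: (classic (forall x, X x -> U x)) => [|nU]; first by left.
case: (classic (forall x, X x -> V x)) => [|nV]; first by right.
by case: X_conn; exists U, V.
Qed.

Definition is_split_piece X A := (exists a, A a) /\ (forall y, A y -> X y) /\
  relclopen X A /\ infinitely_many_components (fun y => X y /\ ~ A y).

Lemma infinitely_many_components_split X :
  infinitely_many_components X -> exists A, is_split_piece X A.
Proof.
move=> X_inf.
case: (infinitely_many_components_disconnected X X_inf)
  => U [V [U_op [V_op [XUV [UV_disj [nU nV]]]]]].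
pose A0 y := X y /\ U y; pose A1 y := X y /\ ~ A0 y.
have A0_cl : relclopen X A0.
  move=> x Xx; case: (classic (U x)) => [Ux | nUx].
    case: (U_op x Ux) => r [r0 Hr]; exists r; split => // y Xy yx.
    by have := Hr y yx; rewrite /A0; tauto.
  have Vx : V x by case: (XUV x Xx).
  case: (V_op x Vx) => r [r0 Hr]; exists r; split => // y Xy yx.
  by have := Hr y yx; have := UV_disj y Xy; rewrite /A0; tauto.
have A1_cl : relclopen X A1 by apply: relclopen_diff => //; apply: relclopen_refl.
case: (classic (infinitely_many_components (fun y => X y /\ ~ A0 y))) => [A0_inf | A0_fin].
  exists A0; split; [|split; [by move=> y [] | by split]].
  by apply: NNPP => A0_empty; apply: nV => x Xx; case: (XUV x Xx) => // Ux;
     case: A0_empty; exists x.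
exists A1; split; [|split; [by move=> y [] | split=> // A1_fin]].
  by apply: NNPP => A1_empty; apply: nU => x Xx; apply: NNPP => nUx;
     apply: A1_empty; exists x; split=> // [[]].
apply: X_inf; apply: (finitely_many_components_union _ _ _ _ _ _ (NNPP _ A0_fin) A1_fin).
- by move=> y Xy; case: (classic (A0 y)) => A0y; [right | left]; rewrite /A1; tauto.
- by move=> y [].
- by move=> y [].
Qed.

(* The guard [infinitely_many_components X ->] makes the specification satisfiable for every X. *)
Definition split_piece X :=
  epsilon (inhabits X) (fun A => infinitely_many_components X -> is_split_piece X A).

Lemma split_pieceP X : infinitely_many_components X -> is_split_piece X (split_piece X).
Proof.
move=> X_inf; have [A HA] := infinitely_many_components_split X X_inf.
have A_spec : exists A, infinitely_many_components X -> is_split_piece X A by exists A.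
exact: (epsilon_spec _ _ A_spec X_inf).
Qed.

Fixpoint remainder X n : vec d -> Prop :=
  match n with
  | 0 => X
  | n'.+1 => fun y => remainder X n' y /\ ~ split_piece (remainder X n') y
  end.

Definition piece X n := split_piece (remainder X n).

Lemma remainder_antitone X n m y : (n <= m)%nat -> remainder X m y -> remainder X n y.
Proof.
move=> /subnKC <-; elim: (m - n)%nat => [|k IH]; first by rewrite addn0.
by rewrite addnS => -[/IH].
Qed.

Section Pieces.
Variable X : vec d -> Prop.
Hypothesis X_inf : infinitely_many_components X.

Lemma remainder_props n : infinitely_many_components (remainder X n) /\
  (forall y, remainder X n y -> X y) /\ relclopen X (remainder X n).
Proof.
elim: n => [|n [Rn_inf [RnX Rn_cl]]] /=; first by split=> //; split=> //; apply: relclopen_refl.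
have [_ [PR [P_cl Rn1_inf]]] := split_pieceP _ Rn_inf.
split=> //; split=> [y [/RnX]|] //.
by apply: relclopen_diff => //; apply: relclopen_trans P_cl.
Qed.

Lemma piece_props n : (exists a, piece X n a) /\ (forall y, piece X n y -> X y) /\
  relclopen X (piece X n).
Proof.
have [Rn_inf [RnX Rn_cl]] := remainder_props n.
have [P_ne [PR [P_cl _]]] := split_pieceP _ Rn_inf.
by split=> //; split=> [y /PR /RnX|]; last apply: relclopen_trans P_cl.
Qed.

Lemma pieces_disjoint n m y : n <> m -> piece X n y -> piece X m y -> False.
Proof.
wlog nm : n m / (n < m)%nat.
  move=> wlog_nm; case: (ltngtP n m) => [nm | mn | ->] //; first exact: wlog_nm.
  by move=> ? Pn Pm; apply: (wlog_nm m n) => //; apply: nesym.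
move=> _ Pn Pm.
have [_ [PR _]] := split_pieceP _ (remainder_props m).1.
by case: (remainder_antitone X n.+1 m y nm (PR y Pm)).
Qed.

End Pieces.

End Components.

Lemma eventually_const_limit (s : nat -> R) l L N0 :
  (forall n, (N0 <= n)%nat -> s n = L) ->
  (forall eps, 0 < eps -> exists N, forall n, (N <= n)%nat -> Rabs (s n - l) < eps) ->
  l = L.
Proof.
move=> s_L s_l; apply: NNPP => lL.
have gap : 0 < Rabs (L - l) by apply: Rabs_pos_lt => ?; apply: lL; lra.
case: (s_l _ gap) => N HN.
by have := HN _ (leq_maxr N0 N); rewrite s_L ?leq_maxl //; lra.
Qed.

Lemma compact_limit_outside_clopen_pieces d (K : vec d -> Prop)
    (A : nat -> vec d -> Prop) (a : nat -> vec d) :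
  vcompact K -> (forall n, relclopen d K (A n)) ->
  (forall n m y, n <> m -> A n y -> A m y -> False) ->
  (forall n, A n (a n)) -> (forall n, K (a n)) ->
  exists phi x, (forall n m, (n < m)%nat -> (phi n < phi m)%nat) /\ K x /\
    (forall m, ~ A m x) /\ forall eps, 0 < eps ->
      exists N, forall n, (N <= n)%nat -> enorm (vsub (a (phi n)) x) < eps.
Proof.
move=> K_compact A_cl A_disj Aa aK.
case: (K_compact a aK) => phi [x [phi_incr [Kx a_cvg]]].
exists phi, x; split=> //; split=> //; split=> // m Amx.
case: (A_cl m x Kx) => r [r0 Hr]; case: (a_cvg r r0) => N HN.
pose n := (N + m.+1)%nat.
have m_lt : (m < phi n)%nat.
  by apply: leq_trans (strictly_increasing_ge _ phi_incr n); rewrite /n addnS ltnS leq_addl.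
apply: (A_disj (phi n) m (a (phi n))); first by move=> e; rewrite e ltnn in m_lt.
  exact: Aa.
by apply/(Hr _ (aK _) (HN n (leq_addr _ _))).
Qed.

Section Counterexample.
Variables (d : nat) (K : vec d -> Prop).
Hypothesis K_compact : vcompact K.
Variables (B : nat -> vec d -> Prop) (b : nat -> vec d) (x : vec d).
Hypotheses (Kx : K x) (bK : forall k, K (b k)) (Bb : forall k, B k (b k))
  (Bx : forall k, ~ B k x) (B_clopen : forall k, relclopen d K (B k))
  (B_disj : forall k l y, k <> l -> B k y -> B l y -> False)
  (b_cvg : forall eps, 0 < eps ->
     exists N, forall k, (N <= k)%nat -> enorm (vsub (b k) x) < eps).

Definition height k := sqrt (enorm (vsub (b k) x)).

Lemma dist_gt0 k : 0 < enorm (vsub (b k) x).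
Proof. by apply: enorm_vsub_gt0 => bx; apply: (Bx k); rewrite -bx. Qed.

Lemma height_gt0 k : 0 < height k.
Proof. exact: sqrt_lt_R0 (dist_gt0 k). Qed.

Lemma height_sqr k : height k * height k = enorm (vsub (b k) x).
Proof. exact: sqrt_sqrt (Rlt_le _ _ (dist_gt0 k)). Qed.

Lemma height_cvg0 eps : 0 < eps -> exists N, forall k, (N <= k)%nat -> height k < eps.
Proof.
move=> eps0; case: (b_cvg (eps * eps)) => [|N HN]; first nra.
exists N => k Nk; rewrite /height -(sqrt_square eps); last lra.
by apply: sqrt_lt_1_alt; split; [apply: Rlt_le; apply: dist_gt0 | apply: HN].
Qed.

Fixpoint step (N : nat) (y : vec d) : R :=
  match N with
  | 0 => 0
  | N'.+1 => step N' y + if excluded_middle_informative (B N' y) then height N' else 0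
  end.

Lemma step_outside N y : (forall k, ~ B k y) -> step N y = 0.
Proof.
move=> nB; elim: N => //= N ->.
case: (excluded_middle_informative (B N y)) => [BNy | _] /=; [by case: (nB N BNy) | ring].
Qed.

Lemma step_inside N k y : B k y -> step N y = if (k < N)%nat then height k else 0.
Proof.
move=> Bky; elim: N => //= N ->.
case: (excluded_middle_informative (B N y)) => [BNy | nBNy].
  have -> : k = N by apply: NNPP => kN; apply: (B_disj k N y).
  by rewrite ltnn ltnSn /=; ring.
have kN : k != N by apply/eqP => kN; apply: nBNy; rewrite -kN.
by rewrite ltnS (@leq_eqVlt k N) (negbTE kN) /=; case: (k < N)%nat; ring.
Qed.

Lemma step_locconst N : locconst d K (step N).
Proof.
elim: N => [|N IH] /= y Ky; first by exists 1; split => //; lra.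
case: (IH y Ky) => r1 [r10 H1]; case: (B_clopen N y Ky) => r2 [r20 H2].
exists (Rmin r1 r2); split => [|z Kz zy]; first exact: Rmin_pos.
rewrite (H1 z Kz (Rlt_le_trans _ _ _ zy (Rmin_l _ _))).
have := H2 z Kz (Rlt_le_trans _ _ _ zy (Rmin_r _ _)).
case: (excluded_middle_informative (B N z)) => BNz;
  by case: (excluded_middle_informative (B N y)) => BNy //=; tauto.
Qed.

Lemma Rabs_step_sub_le N n m y eta : (N <= n)%nat -> (N <= m)%nat ->
  (forall k, (N <= k)%nat -> height k <= eta) -> 0 <= eta ->
  Rabs (step n y - step m y) <= eta.
Proof.
move=> Nn Nm tail_le eta0.
case: (classic (exists k, B k y)) => [[k Bky] | nB]; last first.
  have nB' k : ~ B k y by move=> Bky; apply: nB; exists k.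
  by rewrite !step_outside // Rminus_diag Rabs_R0.
have hk0 := height_gt0 k; rewrite !(step_inside _ k y Bky).
case: (ltnP k n) => kn; case: (ltnP k m) => km; rewrite ?Rminus_diag ?Rabs_R0 //.
- by rewrite Rminus_0_r Rabs_right; [apply: tail_le; apply: leq_trans km | lra].
- by rewrite Rminus_0_l Rabs_Ropp Rabs_right; [apply: tail_le; apply: leq_trans kn | lra].
Qed.

Lemma step_cauchy eps : 0 < eps -> exists N, forall n m, (N <= n)%nat -> (N <= m)%nat ->
  C1norm K (fun y => step n y - step m y) < eps.
Proof.
move=> eps0; case: (height_cvg0 (eps / 2)) => [|N HN]; first lra.
exists N => n m Nn Nm; apply: Rle_lt_trans (_ : eps / 2 < eps); last lra.
apply: C1norm_le_locconst => //; first by exists x.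
  by apply: locconst_sub; apply: step_locconst.
move=> y _; apply: Rabs_step_sub_le Nn Nm _ _; last lra.
by move=> k /HN; lra.
Qed.

Lemma step_no_C1_limit f : Defs.C1 K f ->
  ~ (forall eps, 0 < eps -> exists N, forall n, (N <= n)%nat ->
       C1norm K (fun y => step n y - f y) < eps).
Proof.
move=> [df f_df] step_f.
have step_f_pt y : K y -> forall eps, 0 < eps ->
    exists N, forall n, (N <= n)%nat -> Rabs (step n y - f y) < eps.
  move=> Ky eps eps0; case: (step_f eps eps0) => N HN; exists N => n Nn.
  apply: Rle_lt_trans (HN n Nn); apply: C1norm_ge => //; eexists.
  by apply: locconst_sub_cont_deriv f_df; apply: step_locconst.
have fx : f x = 0.
  by apply: (eventually_const_limit _ _ _ 0 _ (step_f_pt x Kx)) => n _; apply: step_outside.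
have fb k : f (b k) = height k.
  apply: (eventually_const_limit _ _ _ k.+1 _ (step_f_pt _ (bK k))) => n kn.
  by rewrite (step_inside _ k _ (Bb k)) kn.
case: (cont_deriv_lipschitz_at _ _ _ _ x f_df Kx) => C [delta [C0 [delta0 Hlip]]].
case: (height_cvg0 (/ C)) => [|N1 HN1]; first exact: Rinv_0_lt_compat.
case: (b_cvg delta delta0) => N2 HN2; pose k := maxn N1 N2.
have := Hlip _ (bK k) (HN2 k (leq_maxr _ _)).
rewrite fb fx Rminus_0_r Rabs_right; last exact/Rle_ge/Rlt_le/height_gt0.
rewrite -height_sqr => hk_le.
have hk_lt : C * height k < 1.
  by have := Rmult_lt_compat_l _ _ _ C0 (HN1 k (leq_maxl _ _)); rewrite Rinv_r //; lra.
by have := height_gt0 k; nra.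
Qed.

Lemma not_C1_complete : ~ C1_complete K.
Proof.
move=> K_complete.
have step_C1 N : Defs.C1 K (step N) by eexists; apply: locconst_cont_deriv; apply: step_locconst.
case: (K_complete step step_C1 step_cauchy) => f [f_C1 step_f].
exact: step_no_C1_limit f_C1 step_f.
Qed.

End Counterexample.

Theorem mainTheorem5 (d : nat) (K : vec d -> Prop) :
  vcompact K -> infinitely_many_components K -> ~ C1_complete K.
Proof.
move=> K_compact K_inf.
have [a Aa] : exists a, forall n, piece d K n (a n).
  by apply: (choice (piece d K)) => n; exact: (piece_props d K K_inf n).1.
have AK n : forall y, piece d K n y -> K y := (piece_props d K K_inf n).2.1.
have A_cl n : relclopen d K (piece d K n) := (piece_props d K K_inf n).2.2.
have [phi [x [phi_incr [Kx [Ax a_cvg]]]]] :=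
  compact_limit_outside_clopen_pieces d K (piece d K) a K_compact A_cl
    (pieces_disjoint d K K_inf) Aa (fun n => AK n _ (Aa n)).
have phi_inj : injective phi := incn_inj (leq_mono phi_incr).
have B_disj k l y : k <> l -> piece d K (phi k) y -> piece d K (phi l) y -> False.
  by move=> kl; apply: (pieces_disjoint d K K_inf (phi k) (phi l) y) => /phi_inj.
exact: (not_C1_complete d K K_compact _ _ x Kx (fun k => AK _ _ (Aa (phi k)))
  (fun k => Aa (phi k)) (fun k => Ax (phi k)) (fun k => A_cl (phi k)) B_disj a_cvg).
Qed.
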